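(* Let $\pi:\Gamma\to\Gamma_0$ be a surjective group homomorphism, $\mathcal H$ a Hilbert space and $\mu:\Gamma_0\to U(\mathcal H)$ a map with $\mu(e)=\mathrm{Id}$. Then (1) $\mathrm{def}(\mu)=\mathrm{def}(\mu\circ\pi)$, and (2) $\min(D(\mu\circ\pi),\sqrt3)=\min(D(\mu),\sqrt3)$.
   Context: For maps $\mu,\nu:\Gamma\to U(\mathcal H)$ put $\|\mu-\nu\|=\sup_\gamma\|\mu(\gamma)-\nu(\gamma)\|$ (operator norm), $D(\mu)=\inf\{\|\mu-\nu\|:\nu\in\mathrm{Hom}(\Gamma,U(\mathcal H))\}$ and $\mathrm{def}(\mu)=\sup_{x,y\in\Gamma}\|\mu(xy)-\mu(x)\mu(y)\|$. *)

From Stdlib Require Import Reals Lra Classical ClassicalEpsilon.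
Open Scope R_scope.

Record Cx := mkC { re : R; im : R }.
Definition Cadd (a b : Cx) : Cx := mkC (re a + re b) (im a + im b).
Definition Cmul (a b : Cx) : Cx :=
  mkC (re a * re b - im a * im b) (re a * im b + im a * re b).
Definition Cconj (a : Cx) : Cx := mkC (re a) (- im a).
Definition C1 : Cx := mkC 1 0.

Record InnerProductSpace := {
  vec :> Type;
  vadd : vec -> vec -> vec;
  vzero : vec;
  vopp : vec -> vec;
  vscal : Cx -> vec -> vec;
  inner : vec -> vec -> Cx;
  vaddA : forall x y z, vadd x (vadd y z) = vadd (vadd x y) z;
  vaddC : forall x y, vadd x y = vadd y x;
  vadd0 : forall x, vadd x vzero = x;
  vaddN : forall x, vadd x (vopp x) = vzero;
  vscal1 : forall x, vscal C1 x = x;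
  vscalA : forall a b x, vscal a (vscal b x) = vscal (Cmul a b) x;
  vscalDr : forall a x y, vscal a (vadd x y) = vadd (vscal a x) (vscal a y);
  vscalDl : forall a b x, vscal (Cadd a b) x = vadd (vscal a x) (vscal b x);
  innerDl : forall x y z, inner (vadd x y) z = Cadd (inner x z) (inner y z);
  innerZl : forall a x y, inner (vscal a x) y = Cmul a (inner x y);
  innerC : forall x y, inner y x = Cconj (inner x y);
  inner_ge0 : forall x, 0 <= re (inner x x);
  inner_eq0 : forall x, re (inner x x) = 0 -> x = vzero
}.

Definition vnorm {H : InnerProductSpace} (x : H) : R := sqrt (re (inner H x x)).
Definition vsub {H : InnerProductSpace} (x y : H) : H := vadd H x (vopp H y).

Definition complete (H : InnerProductSpace) : Prop :=
  forall u : nat -> H,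
    (forall eps, 0 < eps -> exists N, forall m n, (N <= m)%nat -> (N <= n)%nat ->
       vnorm (vsub (u m) (u n)) < eps) ->
    exists l : H, forall eps, 0 < eps -> exists N, forall n, (N <= n)%nat ->
       vnorm (vsub (u n) l) < eps.

Record HilbertSpace := {
  hips :> InnerProductSpace;
  hcomplete : complete hips
}.

Definition linear_op {H : InnerProductSpace} (T : H -> H) : Prop :=
  (forall x y, T (vadd H x y) = vadd H (T x) (T y)) /\
  (forall a x, T (vscal H a x) = vscal H a (T x)).

Definition unitary {H : InnerProductSpace} (T : H -> H) : Prop :=
  linear_op T /\ (forall x y, inner H (T x) (T y) = inner H x y) /\
  (forall y, exists x, T x = y).

Lemma Rsup_spec_ex (E : R -> Prop) :
  exists l, is_lub E l \/ ((~ exists m, is_lub E m) /\ l = 0).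
Proof.
  destruct (classic (exists m, is_lub E m)) as [[m Hm]|Hn].
  - exists m; left; exact Hm.
  - exists 0; right; split; [exact Hn | reflexivity].
Qed.

(* least upper bound of E when it exists (0 otherwise; never used here,
   since all the sets below are nonempty and bounded) *)
Definition Rsup (E : R -> Prop) : R :=
  proj1_sig (constructive_indefinite_description _ (Rsup_spec_ex E)).

Definition Rinf (E : R -> Prop) : R := - Rsup (fun r => E (- r)).

Definition opnorm {H : InnerProductSpace} (A : H -> H) : R :=
  Rsup (fun r => exists x : H, vnorm x <= 1 /\ r = vnorm (A x)).

Record Group := {
  gcar :> Type;
  gmul : gcar -> gcar -> gcar;
  gone : gcar;
  ginv : gcar -> gcar;
  gmulA : forall x y z, gmul x (gmul y z) = gmul (gmul x y) z;
  gmul1 : forall x, gmul x gone = x;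
  gmulV : forall x, gmul x (ginv x) = gone
}.

Definition group_hom (G K : Group) (f : G -> K) : Prop :=
  forall x y, f (gmul G x y) = gmul K (f x) (f y).

Definition unitary_map {G : Group} {H : InnerProductSpace} (mu : G -> H -> H) : Prop :=
  forall g, unitary (mu g).

Definition unitary_rep {G : Group} {H : InnerProductSpace} (nu : G -> H -> H) : Prop :=
  unitary_map nu /\ forall x y (v : H), nu (gmul G x y) v = nu x (nu y v).

Definition mapdist {G : Group} {H : InnerProductSpace} (mu nu : G -> H -> H) : R :=
  Rsup (fun r => exists g : G, r = opnorm (fun v => vsub (mu g v) (nu g v))).

Definition Dist {G : Group} {H : InnerProductSpace} (mu : G -> H -> H) : R :=
  Rinf (fun r => exists nu, unitary_rep nu /\ r = mapdist mu nu).

Definition defect {G : Group} {H : InnerProductSpace} (mu : G -> H -> H) : R :=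
  Rsup (fun r => exists x y : G,
          r = opnorm (fun v => vsub (mu (gmul G x y) v) (mu x (mu y v)))).

(* A unitary representation nu of Gamma within distance d < sqrt 3 of mu o pi is trivial
   on ker pi, because there nu is within d of the identity. Writing
   c = sup ||x - V x||^2 / ||x||^2 over the unitaries V = nu k, k in ker pi, the
   parallelogram law applied to y = x - V x and V y gives ||x - V^2 x||^2 >= (4 - c) ||y||^2,
   so c <= c / (4 - c); since d^2 < 3 this forces c = 0. Hence nu factors through pi, so
   representations of Gamma at distance < sqrt 3 from mu o pi are exactly the pullbacks of
   representations of Gamma_0, at the same distance from mu. The defect is unchanged
   because pi is a surjective homomorphism. *)
From Stdlib Require Import Reals Lra ClassicalEpsilon FunctionalExtensionality PropExtensionality.
Open Scope R_scope.

Lemma Rsup_is_lub (E : R -> Prop) : (exists m, is_lub E m) -> is_lub E (Rsup E).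
Proof.
  intro Hex. unfold Rsup.
  destruct (constructive_indefinite_description _ (Rsup_spec_ex E)) as [l [Hl|[Hn ->]]]; simpl;
    [exact Hl | contradiction].
Qed.

Lemma Rsup_bounded (E : R -> Prop) (M : R) : (exists e, E e) -> (forall e, E e -> e <= M) ->
  (forall e, E e -> e <= Rsup E) /\ Rsup E <= M.
Proof.
  intros Hne Hb.
  destruct (completeness E (ex_intro _ M Hb) Hne) as [m Hm].
  destruct (Rsup_is_lub E (ex_intro _ m Hm)) as [H1 H2].
  split; [exact H1 | apply H2; exact Hb].
Qed.

Lemma Rinf_glb (E : R -> Prop) : (exists e, E e) -> (forall e, E e -> 0 <= e) ->
  (forall e, E e -> Rinf E <= e) /\ (forall m, (forall e, E e -> m <= e) -> m <= Rinf E).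
Proof.
  intros [e0 He0] Hpos. unfold Rinf.
  set (F := fun r => E (- r)).
  assert (HF : forall e, E e -> F (- e)) by (intros e He; unfold F; rewrite Ropp_involutive; exact He).
  assert (Hb : bound F) by (exists 0; intros r Hr; apply Hpos in Hr; lra).
  destruct (completeness F Hb (ex_intro _ (- e0) (HF e0 He0))) as [m Hm].
  destruct (Rsup_is_lub F (ex_intro _ m Hm)) as [H1 H2].
  split.
  - intros e He. pose proof (H1 _ (HF e He)). lra.
  - intros m' Hm'. assert (Rsup F <= - m'); [|lra].
    apply H2. intros r Hr. apply Hm' in Hr. lra.
Qed.

(* Truncation at c sees only the part of A below c. *)
Lemma Rmin_Rinf_eq (A B : R -> Prop) (c : R) : (forall r, B r -> A r) -> (exists r, B r) ->
  (forall r, A r -> 0 <= r) -> (forall r, A r -> r < c -> B r) ->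
  Rmin (Rinf A) c = Rmin (Rinf B) c.
Proof.
  intros BA [b Hb] Apos AB.
  destruct (Rinf_glb A (ex_intro _ b (BA b Hb)) Apos) as [A1 A2].
  destruct (Rinf_glb B (ex_intro _ b Hb) (fun r Hr => Apos r (BA r Hr))) as [B1 B2].
  assert (HAB : Rinf A <= Rinf B) by (apply B2; intros e He; apply A1, BA, He).
  assert (HBA : Rmin (Rinf B) c <= Rinf A).
  { apply A2. intros e He. destruct (Rlt_or_le e c) as [Hc|Hc].
    - apply Rle_trans with (Rinf B); [apply Rmin_l | apply B1, AB; assumption].
    - apply Rle_trans with c; [apply Rmin_r | exact Hc]. }
  apply Rle_antisym.
  - apply Rmin_glb; [apply Rle_trans with (Rinf A); [apply Rmin_l | exact HAB] | apply Rmin_r].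
  - apply Rmin_glb; [exact HBA | apply Rmin_r].
Qed.

Lemma le0_of_le_geometric (a K q : R) : 0 <= q < 1 -> (forall n, a <= K * q ^ n) -> a <= 0.
Proof.
  intros Hq Ha. destruct (Rle_or_lt a 0) as [|Hpos]; [assumption | exfalso].
  assert (HK : a <= K) by (specialize (Ha O); simpl in Ha; lra).
  destruct (pow_lt_1_zero q ltac:(rewrite Rabs_right; lra) (a / K))
    as [N HN]; [apply Rdiv_lt_0_compat; lra|].
  specialize (HN N (le_n N)). rewrite Rabs_right in HN by (apply Rle_ge, pow_le; lra).
  specialize (Ha N).
  assert (K * q ^ N < K * (a / K)) by (apply Rmult_lt_compat_l; lra).
  replace (K * (a / K)) with a in * by (field; lra). lra.
Qed.

Section InnerProductSpaceFacts.

Context {H : InnerProductSpace}.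

Definition vnorm2 (x : H) : R := re (inner H x x).

Lemma vadd0l (x : H) : vadd H (vzero H) x = x.
Proof. rewrite vaddC; apply vadd0. Qed.

Lemma vopp_unique (a w : H) : vadd H a w = vzero H -> w = vopp H a.
Proof.
  intro E. rewrite <- (vadd0 H w), <- (vaddN H a), vaddA, (vaddC H w a), E.
  apply vadd0l.
Qed.

Lemma vadd_idem_zero (a : H) : a = vadd H a a -> a = vzero H.
Proof.
  intro E. transitivity (vadd H (vadd H a a) (vopp H a)).
  - rewrite <- vaddA, vaddN, vadd0; reflexivity.
  - rewrite <- E; apply vaddN.
Qed.

Lemma voppK (a : H) : vopp H (vopp H a) = a.
Proof. symmetry; apply vopp_unique. rewrite vaddC; apply vaddN. Qed.

Lemma vsub_eq0 (a b : H) : vsub a b = vzero H -> a = b.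
Proof. unfold vsub. intro E. apply vopp_unique in E. rewrite <- (voppK b), E, voppK. reflexivity. Qed.

Lemma linear_op0 (T : H -> H) : linear_op T -> T (vzero H) = vzero H.
Proof. intros [TD _]. apply vadd_idem_zero. rewrite <- TD, vadd0. reflexivity. Qed.

Lemma linear_opN (T : H -> H) (b : H) : linear_op T -> T (vopp H b) = vopp H (T b).
Proof. intros L. apply vopp_unique. rewrite <- (proj1 L), vaddN. apply linear_op0, L. Qed.

Lemma linear_opB (T : H -> H) (a b : H) : linear_op T -> T (vsub a b) = vsub (T a) (T b).
Proof. intros L. unfold vsub. rewrite (proj1 L), linear_opN by exact L. reflexivity. Qed.

Lemma vscal0 (c : Cx) : vscal H c (vzero H) = vzero H.
Proof. apply vadd_idem_zero. rewrite <- vscalDr, vadd0. reflexivity. Qed.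

Lemma vscalB (c : Cx) (u w : H) : vscal H c (vsub u w) = vsub (vscal H c u) (vscal H c w).
Proof.
  unfold vsub. rewrite vscalDr. f_equal. apply vopp_unique.
  rewrite <- vscalDr, vaddN. apply vscal0.
Qed.

Lemma re_inner_sym (a b : H) : re (inner H a b) = re (inner H b a).
Proof. rewrite (innerC H b a). reflexivity. Qed.

Lemma re_innerDl (x y z : H) : re (inner H (vadd H x y) z) = re (inner H x z) + re (inner H y z).
Proof. rewrite innerDl. reflexivity. Qed.

Lemma re_innerDr (x y z : H) : re (inner H z (vadd H x y)) = re (inner H z x) + re (inner H z y).
Proof. rewrite !(re_inner_sym z). apply re_innerDl. Qed.

Lemma re_inner0l (z : H) : re (inner H (vzero H) z) = 0.
Proof. pose proof (re_innerDl (vzero H) (vzero H) z) as E. rewrite vadd0 in E. lra. Qed.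

Lemma re_innerNl (x z : H) : re (inner H (vopp H x) z) = - re (inner H x z).
Proof. pose proof (re_innerDl x (vopp H x) z) as E. rewrite vaddN, re_inner0l in E. lra. Qed.

Lemma re_innerNr (x z : H) : re (inner H z (vopp H x)) = - re (inner H z x).
Proof. rewrite !(re_inner_sym z). apply re_innerNl. Qed.

Lemma re_innerZl (t : R) (x z : H) :
  re (inner H (vscal H (mkC t 0) x) z) = t * re (inner H x z).
Proof. rewrite innerZl. simpl. ring. Qed.

Lemma re_innerZr (t : R) (x z : H) :
  re (inner H z (vscal H (mkC t 0) x)) = t * re (inner H z x).
Proof. rewrite !(re_inner_sym z). apply re_innerZl. Qed.

Lemma vnorm2_ge0 (x : H) : 0 <= vnorm2 x.
Proof. apply inner_ge0. Qed.

Lemma vnorm2_0 : vnorm2 (vzero H) = 0.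
Proof. apply re_inner0l. Qed.

Lemma vnorm2D (a b : H) : vnorm2 (vadd H a b) = vnorm2 a + vnorm2 b + 2 * re (inner H a b).
Proof. unfold vnorm2. rewrite re_innerDl, !re_innerDr, (re_inner_sym b a). ring. Qed.

Lemma vnorm2B (a b : H) : vnorm2 (vsub a b) = vnorm2 a + vnorm2 b - 2 * re (inner H a b).
Proof. unfold vsub. rewrite vnorm2D. unfold vnorm2. rewrite re_innerNr, re_innerNl, re_innerNr. ring. Qed.

Lemma parallelogram (a b : H) :
  vnorm2 (vadd H a b) + vnorm2 (vsub a b) = 2 * vnorm2 a + 2 * vnorm2 b.
Proof. rewrite vnorm2D, vnorm2B. ring. Qed.

Lemma vnorm2Z (t : R) (x : H) : vnorm2 (vscal H (mkC t 0) x) = t * t * vnorm2 x.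
Proof. unfold vnorm2. rewrite re_innerZl, re_innerZr. ring. Qed.

Lemma unitary_vnorm2 (T : H -> H) (x : H) : unitary T -> vnorm2 (T x) = vnorm2 x.
Proof. intros [_ [I _]]. unfold vnorm2. rewrite I. reflexivity. Qed.

Lemma vnorm_le1 (x : H) : vnorm x <= 1 <-> vnorm2 x <= 1.
Proof.
  unfold vnorm. fold (vnorm2 x). pose proof (vnorm2_ge0 x) as Hx.
  pose proof (sqrt_sqrt _ Hx). pose proof (sqrt_pos (vnorm2 x)).
  split; intro h; [nra | rewrite <- sqrt_1; apply sqrt_le_1_alt, h].
Qed.

Lemma vnorm2_le_sqr (x : H) (r : R) : vnorm x <= r -> vnorm2 x <= r * r.
Proof.
  unfold vnorm. fold (vnorm2 x). pose proof (vnorm2_ge0 x) as Hx.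
  pose proof (sqrt_sqrt _ Hx). pose proof (sqrt_pos (vnorm2 x)). intro. nra.
Qed.

Lemma unitary_sub_vnorm_le2 (U W : H -> H) (x : H) :
  unitary U -> unitary W -> vnorm x <= 1 -> vnorm (vsub (U x) (W x)) <= 2.
Proof.
  intros HU HW Hx. apply vnorm_le1 in Hx.
  pose proof (parallelogram (U x) (W x)) as E.
  rewrite (unitary_vnorm2 U x HU), (unitary_vnorm2 W x HW) in E.
  pose proof (vnorm2_ge0 (vadd H (U x) (W x))).
  unfold vnorm. fold (vnorm2 (vsub (U x) (W x))).
  rewrite <- (sqrt_square 2) by lra. apply sqrt_le_1_alt. lra.
Qed.

Lemma displacement_homogeneous (V : H -> H) (c : R) : linear_op V -> 0 <= c ->
  (forall x, vnorm2 x <= 1 -> vnorm2 (vsub x (V x)) <= c) ->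
  forall x, vnorm2 (vsub x (V x)) <= c * vnorm2 x.
Proof.
  intros LV Hc Hb x. destruct (Req_dec (vnorm2 x) 0) as [E|E].
  - apply inner_eq0 in E. subst x. rewrite (linear_op0 V LV). unfold vsub.
    rewrite vaddN, vnorm2_0. lra.
  - pose proof (vnorm2_ge0 x).
    set (q := sqrt (vnorm2 x)).
    assert (Hq : q * q = vnorm2 x) by (apply sqrt_sqrt; lra).
    assert (Hq0 : 0 < q) by (apply sqrt_lt_R0; lra).
    pose proof (Hb (vscal H (mkC (/ q) 0) x)) as Hbz.
    rewrite (proj2 LV), <- vscalB, !vnorm2Z, <- Hq in Hbz.
    pose proof (vnorm2_ge0 (vsub x (V x))).
    replace (/ q * / q * (q * q)) with 1 in Hbz by (field; lra).
    specialize (Hbz (Rle_refl 1)).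
    replace (vnorm2 (vsub x (V x))) with (q * q * (/ q * / q * vnorm2 (vsub x (V x))))
      by (field; lra).
    rewrite Hq, (Rmult_comm c). apply Rmult_le_compat_l; lra.
Qed.

(* Parallelogram law for y = x - V x and V y, noting x - V^2 x = y + V y. *)
Lemma unitary_displacement_contract (V : H -> H) (c : R) : unitary V -> c < 4 ->
  (forall x, vnorm2 (vsub x (V x)) <= c * vnorm2 x) ->
  (forall x, vnorm2 (vsub x (V (V x))) <= c * vnorm2 x) ->
  forall x, vnorm2 (vsub x (V x)) <= c / (4 - c) * vnorm2 x.
Proof.
  intros U Hc4 HV HV2 x.
  set (y := vsub x (V x)).
  assert (E : vsub x (V (V x)) = vadd H y (V y)).
  { unfold y. rewrite (linear_opB V x (V x) (proj1 U)). unfold vsub.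
    rewrite <- (vaddA H x), (vaddA H (vopp H (V x)) (V x)),
      (vaddC H (vopp H (V x)) (V x)), vaddN, vadd0l.
    reflexivity. }
  pose proof (HV2 x) as H1. rewrite E in H1.
  pose proof (HV y) as H2.
  pose proof (parallelogram y (V y)) as H3. rewrite (unitary_vnorm2 V y U) in H3.
  pose proof (vnorm2_ge0 y). pose proof (vnorm2_ge0 x).
  apply (Rmult_le_reg_r (4 - c)); [lra|].
  replace (c / (4 - c) * vnorm2 x * (4 - c)) with (c * vnorm2 x) by (field; lra).
  fold y. nra.
Qed.

Lemma opnorm_spec (A : H -> H) (M : R) : 0 <= M ->
  (forall x, vnorm x <= 1 -> vnorm (A x) <= M) ->
  (forall x, vnorm x <= 1 -> vnorm (A x) <= opnorm A) /\ opnorm A <= M /\ 0 <= opnorm A.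
Proof.
  intros HM Hb.
  assert (Hz : vnorm (vzero H) <= 1) by (apply vnorm_le1; rewrite vnorm2_0; lra).
  set (E := fun r => exists x : H, vnorm x <= 1 /\ r = vnorm (A x)).
  assert (HE : E (vnorm (A (vzero H)))) by (exists (vzero H); split; [exact Hz | reflexivity]).
  destruct (Rsup_bounded E M) as [H1 H2].
  - exists (vnorm (A (vzero H))); exact HE.
  - intros e [x [Hx ->]]. apply Hb, Hx.
  - split; [|split; [exact H2|]].
    + intros x Hx. apply H1. exists x. split; [exact Hx | reflexivity].
    + apply Rle_trans with (vnorm (A (vzero H))); [apply sqrt_pos | apply H1, HE].
Qed.

End InnerProductSpaceFacts.

Lemma unitary_id (H : InnerProductSpace) : unitary (fun v : H => v).
Proof. split; [split; reflexivity|]. split; [reflexivity|]. intro y; exists y; reflexivity. Qed.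

Section GroupFacts.

Context {G : Group}.

Lemma gmul_idem_one (y : G) : y = gmul G y y -> y = gone G.
Proof.
  intro E. transitivity (gmul G (gmul G y y) (ginv G y)).
  - rewrite <- gmulA, gmulV, gmul1; reflexivity.
  - rewrite <- E; apply gmulV.
Qed.

Lemma gmulVl (x : G) : gmul G (ginv G x) x = gone G.
Proof.
  apply gmul_idem_one.
  rewrite (gmulA G (gmul G (ginv G x) x) (ginv G x) x), <- (gmulA G (ginv G x) x (ginv G x)),
    gmulV, gmul1.
  reflexivity.
Qed.

Lemma gmul1l (x : G) : gmul G (gone G) x = x.
Proof. rewrite <- (gmulV G x), <- gmulA, gmulVl, gmul1. reflexivity. Qed.

End GroupFacts.

Lemma group_hom_one (G K : Group) (f : G -> K) : group_hom G K f -> f (gone G) = gone K.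
Proof. intro Hf. apply gmul_idem_one. rewrite <- Hf, gmul1. reflexivity. Qed.

Lemma mapdist_spec (G : Group) (H : InnerProductSpace) (mu nu : G -> H -> H) :
  unitary_map mu -> unitary_map nu ->
  (forall g, opnorm (fun v => vsub (mu g v) (nu g v)) <= mapdist mu nu) /\ 0 <= mapdist mu nu.
Proof.
  intros Hmu Hnu.
  set (op := fun g => opnorm (fun v => vsub (mu g v) (nu g v))).
  assert (Hop : forall g, op g <= 2 /\ 0 <= op g).
  { intro g. destruct (opnorm_spec (fun v => vsub (mu g v) (nu g v)) 2) as [_ [h1 h2]].
    - lra.
    - intros x Hx. apply unitary_sub_vnorm_le2; auto.
    - split; assumption. }
  destruct (Rsup_bounded (fun r => exists g : G, r = op g) 2) as [H1 _].
  - exists (op (gone G)), (gone G). reflexivity.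
  - intros e [g ->]. apply Hop.
  - split.
    + intro g. apply H1. exists g; reflexivity.
    + apply Rle_trans with (op (gone G)); [apply Hop | apply H1; exists (gone G); reflexivity].
Qed.

Definition displacement_le {G : Group} {H : InnerProductSpace}
    (P : G -> Prop) (nu : G -> H -> H) (c : R) : Prop :=
  forall k, P k -> forall x : H, vnorm2 (vsub x (nu k x)) <= c * vnorm2 x.

Section Displacement.

Context {G : Group} {H : InnerProductSpace}.
Variables (P : G -> Prop) (nu : G -> H -> H).
Hypothesis nu_rep : unitary_rep nu.
Hypothesis P_sqr : forall k, P k -> P (gmul G k k).

Lemma displacement_le_mono (c c' : R) : c <= c' -> displacement_le P nu c -> displacement_le P nu c'.
Proof.
  intros Hc HQ k Pk x. apply Rle_trans with (c * vnorm2 x); [apply HQ, Pk|].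
  apply Rmult_le_compat_r; [apply vnorm2_ge0 | exact Hc].
Qed.

Lemma displacement_le_contract (c : R) :
  c < 4 -> displacement_le P nu c -> displacement_le P nu (c / (4 - c)).
Proof.
  destruct nu_rep as [Hu Hmul]. intros Hc HQ k Pk.
  apply unitary_displacement_contract; [apply Hu | exact Hc | apply HQ, Pk |].
  intro x. rewrite <- Hmul. apply HQ, P_sqr, Pk.
Qed.

(* The bounds c_n = c0 q^n with q = 1/(4 - c0) < 1 satisfy c_n / (4 - c_n) <= c_(n+1). *)
Lemma displacement_le_trivial (c0 : R) : 0 <= c0 < 3 -> displacement_le P nu c0 ->
  forall k, P k -> forall x, nu k x = x.
Proof.
  intros Hc0 HQ.
  set (q := / (4 - c0)).
  assert (Hq : 0 <= q < 1).
  { unfold q. split; [apply Rlt_le, Rinv_0_lt_compat; lra|].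
    rewrite <- Rinv_1. apply Rinv_lt_contravar; lra. }
  assert (Hall : forall n, displacement_le P nu (c0 * q ^ n)).
  { induction n as [|n IH]; [simpl; rewrite Rmult_1_r; exact HQ|].
    assert (hqn : 0 <= q ^ n <= 1) by (split; [apply pow_le | rewrite <- (pow1 n); apply pow_incr]; lra).
    assert (hc : 0 <= c0 * q ^ n <= c0) by (split; nra).
    apply displacement_le_mono with (c0 * q ^ n / (4 - c0 * q ^ n));
      [| apply displacement_le_contract; [lra | exact IH]].
    simpl. unfold Rdiv. replace (c0 * (q * q ^ n)) with (c0 * q ^ n * q) by ring.
    apply Rmult_le_compat_l; [lra|]. apply Rinv_le_contravar; lra. }
  intros k Pk x. symmetry. apply vsub_eq0, inner_eq0, Rle_antisym; [|apply vnorm2_ge0].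
  apply (le0_of_le_geometric _ (c0 * vnorm2 x) q Hq). intro n.
  replace (c0 * vnorm2 x * q ^ n) with (c0 * q ^ n * vnorm2 x) by ring.
  apply Hall, Pk.
Qed.

Lemma rep_trivial_of_opnorm_lt_sqrt3 (d : R) : 0 <= d < sqrt 3 ->
  (forall k, P k -> opnorm (fun v => vsub v (nu k v)) <= d) -> forall k, P k -> forall x, nu k x = x.
Proof.
  intros Hd Hop. apply displacement_le_trivial with (d * d).
  - pose proof (sqrt_sqrt 3 ltac:(lra)). nra.
  - intros k Pk. pose proof (proj1 nu_rep k) as Uk.
    apply displacement_homogeneous; [apply Uk | nra |]. intros x Hx.
    apply vnorm2_le_sqr, Rle_trans with (2 := Hop k Pk).
    refine (proj1 (opnorm_spec (fun v => vsub v (nu k v)) 2 _ _) x _); [lra | | apply vnorm_le1, Hx].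
    intros y Hy. exact (unitary_sub_vnorm_le2 (fun v => v) (nu k) y (unitary_id H) Uk Hy).
Qed.

End Displacement.

Section Pullback.

Variables (Gam Gam0 : Group) (pi : Gam -> Gam0) (H : InnerProductSpace).
Hypothesis pi_hom : group_hom Gam Gam0 pi.
Hypothesis pi_surj : forall y, exists x, pi x = y.

Lemma unitary_rep_comp (nu : Gam0 -> H -> H) : unitary_rep nu -> unitary_rep (fun g => nu (pi g)).
Proof.
  intros [Hu Hmul]. split; [intro g; apply Hu|].
  intros x y v. rewrite pi_hom. apply Hmul.
Qed.

Lemma mapdist_comp_surj (mu nu : Gam0 -> H -> H) :
  mapdist (fun g => mu (pi g)) (fun g => nu (pi g)) = mapdist mu nu.
Proof.
  unfold mapdist. f_equal. apply functional_extensionality; intro r.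
  apply propositional_extensionality. split.
  - intros [g ->]. exists (pi g). reflexivity.
  - intros [y ->]. destruct (pi_surj y) as [g <-]. exists g. reflexivity.
Qed.

Lemma defect_comp_surj (mu : Gam0 -> H -> H) : defect (fun g => mu (pi g)) = defect mu.
Proof.
  unfold defect. f_equal. apply functional_extensionality; intro r.
  apply propositional_extensionality. split.
  - intros [x [y ->]]. exists (pi x), (pi y). rewrite pi_hom. reflexivity.
  - intros [x [y ->]]. destruct (pi_surj x) as [x' <-]. destruct (pi_surj y) as [y' <-].
    exists x', y'. rewrite pi_hom. reflexivity.
Qed.

Lemma unitary_rep_factor (nu : Gam -> H -> H) : unitary_rep nu ->
  (forall k, pi k = gone Gam0 -> forall x, nu k x = x) ->
  exists nu0, unitary_rep nu0 /\ nu = (fun g => nu0 (pi g)).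
Proof.
  intros Hnu Hker.
  assert (Hfib : forall g h, pi g = pi h -> nu g = nu h).
  { intros g h E. apply functional_extensionality; intro v.
    set (k := gmul Gam (ginv Gam g) h).
    assert (Ek : h = gmul Gam g k) by (unfold k; rewrite gmulA, gmulV, gmul1l; reflexivity).
    assert (Pk : pi k = gone Gam0).
    { unfold k. rewrite pi_hom, <- E, <- pi_hom, gmulVl. apply group_hom_one, pi_hom. }
    rewrite Ek, (proj2 Hnu), (Hker k Pk). reflexivity. }
  destruct (choice (fun y g => pi g = y) pi_surj) as [sec Hsec].
  exists (fun y => nu (sec y)). split.
  - split; [intro y; apply (proj1 Hnu)|].
    intros x y v. rewrite (Hfib _ (gmul Gam (sec x) (sec y))) by (rewrite pi_hom, !Hsec; reflexivity).
    apply (proj2 Hnu).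
  - apply functional_extensionality; intro g. apply Hfib. symmetry. apply Hsec.
Qed.

Lemma rep_near_pullback_factors (mu : Gam0 -> H -> H) (nu : Gam -> H -> H) :
  unitary_map mu -> (forall v, mu (gone Gam0) v = v) -> unitary_rep nu ->
  mapdist (fun g => mu (pi g)) nu < sqrt 3 ->
  exists nu0, unitary_rep nu0 /\ nu = (fun g => nu0 (pi g)).
Proof.
  intros Hmu Hmu_e Hnu Hd.
  destruct (mapdist_spec Gam H (fun g => mu (pi g)) nu (fun g => Hmu (pi g)) (proj1 Hnu))
    as [Hle Hge].
  apply unitary_rep_factor; [exact Hnu|].
  apply (rep_trivial_of_opnorm_lt_sqrt3 (fun k => pi k = gone Gam0) nu Hnu)
    with (mapdist (fun g => mu (pi g)) nu).
  - intros k Hk. rewrite pi_hom, Hk. apply gmul1.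
  - split; assumption.
  - intros k Hk. specialize (Hle k). simpl in Hle. rewrite Hk in Hle.
    replace (fun v => vsub v (nu k v)) with (fun v => vsub (mu (gone Gam0) v) (nu k v));
      [exact Hle|].
    apply functional_extensionality; intro v. rewrite Hmu_e. reflexivity.
Qed.

End Pullback.

Lemma unitary_rep_trivial (G : Group) (H : InnerProductSpace) :
  unitary_rep (fun (_ : G) (v : H) => v).
Proof. split; [intro g; apply unitary_id | reflexivity]. Qed.

Theorem lemma1p2 (Gam Gam0 : Group) (pi : Gam -> Gam0)
  (Hpi_hom : group_hom Gam Gam0 pi) (Hpi_surj : forall y, exists x, pi x = y)
  (H : HilbertSpace) (mu : Gam0 -> H -> H)
  (Hmu : unitary_map mu) (Hmu_e : forall v, mu (gone Gam0) v = v) :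
  defect mu = defect (fun g => mu (pi g)) /\
  Rmin (Dist (fun g => mu (pi g))) (sqrt 3) = Rmin (Dist mu) (sqrt 3).
Proof.
  split; [symmetry; apply defect_comp_surj; assumption|].
  unfold Dist. apply Rmin_Rinf_eq.
  - intros r [nu [Hnu ->]]. exists (fun g => nu (pi g)).
    split; [apply unitary_rep_comp; assumption | symmetry; apply mapdist_comp_surj; assumption].
  - exists (mapdist mu (fun _ v => v)), (fun _ v => v). split; [apply unitary_rep_trivial | reflexivity].
  - intros r [nu [Hnu ->]]. exact (proj2 (mapdist_spec _ _ _ _ (fun g => Hmu (pi g)) (proj1 Hnu))).
  - intros r [nu [Hnu ->]] Hr.
    destruct (rep_near_pullback_factors Gam Gam0 pi H Hpi_hom Hpi_surj mu nu Hmu Hmu_e Hnu Hr)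
      as [nu0 [Hnu0 ->]].
    exists nu0. split; [exact Hnu0 | apply mapdist_comp_surj; assumption].
Qed.
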